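(* Let $H$ be an abelian subgroup of $\operatorname{Sym}_n$. Let $w_1,w_2,w_{1,1},w_{1,2},w_{1,3},w_{1,1}',w_{1,2}',w_{1,3}',w_{2,2},w_{2,1}',w_{2,2}',w_{2,3}'\in \mathrm{FM}_n$ be such that $$w_1=w_{1,1}w_{1,2}w_{1,3}=w_{1,1}'w_{1,2}'w_{1,3}',\qquad w_2=w_{1,1}'w_{2,2}w_{1,3}'=w_{2,1}'w_{2,2}'w_{2,3}',$$ and $\pi(w_{1,2})=\pi(w_{1,2}')=\pi(w_{2,2})=\pi(w_{2,2}')=z$. (i) If $w_{1,2}$ and $w_{1,2}'$ overlap in $w_1$, $w_{2,2}$ and $w_{2,2}'$ overlap in $w_2$, $|w_{1,3}|,|w_{2,3}'|<|w_{1,3}'|$ and $H_n=\{\mathrm{id}\}$, then $w_1=w_2$. (ii) If $w_{1,2}$ and $w_{1,2}'$ overlap in $w_1$, $w_{2,2}$ and $w_{2,2}'$ overlap in $w_2$, $|w_{1,1}|,|w_{2,1}'|<|w_{1,1}'|$ and $H_1=\{\mathrm{id}\}$, then $w_1=w_2$.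
   Context: $S=S_n(H)$ is the monoid with presentation $\langle a_1,\dots,a_n \mid a_1\cdots a_n = a_{\sigma(1)}\cdots a_{\sigma(n)},\ \sigma\in H\rangle$, and $z=a_1a_2\cdots a_n\in S$. $\mathrm{FM}_n=\langle x_1,\dots,x_n\rangle$ is the free monoid of rank $n$ and $\pi:\mathrm{FM}_n\to S$ is the monoid morphism with $\pi(x_i)=a_i$. $|w|$ is the length of a word $w$. $H_i=\{\sigma\in H\mid\sigma(i)=i\}$. Overlap: if $w=x_{i_1}\cdots x_{i_m}$ and $u=x_{i_p}\cdots x_{i_{p+r}}$, $v=x_{i_q}\cdots x_{i_{q+s}}$ are subwords at the indicated positions (here the positions are those determined by the given factorizations, e.g. $w_{1,2}$ occupies the positions after $w_{1,1}$ in $w_1$), then $u$ and $v$ overlap in $w$ if $p\leq q\leq p+r$ or $q\leq p\leq q+s$. *)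

From mathcomp Require Import all_boot all_fingroup.
Set Implicit Arguments. Unset Strict Implicit. Unset Printing Implicit Defensive.

(* Letters x_1..x_n are represented by 'I_n (0-indexed); words of FM_n by seq 'I_n. *)

Definition perm_word (n : nat) (s : {perm 'I_n}) : seq 'I_n :=
  [seq s i | i <- enum 'I_n].

Definition zword (n : nat) : seq 'I_n := enum 'I_n.

(* one elementary step of the congruence generated by the defining relations
   a_1...a_n = a_{s(1)}...a_{s(n)}, s in H (applied in either direction) *)
Definition rstep (n : nat) (H : {set {perm 'I_n}}) (u v : seq 'I_n) : Prop :=
  exists (p q : seq 'I_n) (s : {perm 'I_n}), s \in H /\
    ((u = p ++ zword n ++ q /\ v = p ++ perm_word s ++ q) \/
     (u = p ++ perm_word s ++ q /\ v = p ++ zword n ++ q)).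

(* equality in S_n(H) of the images under pi *)
Inductive req (n : nat) (H : {set {perm 'I_n}}) : seq 'I_n -> seq 'I_n -> Prop :=
  | req_refl u : req H u u
  | req_step u v w : rstep H u v -> req H v w -> req H u w.

Definition pi_is_z (n : nat) (H : {set {perm 'I_n}}) (w : seq 'I_n) : Prop :=
  req H w (zword n).

Definition stabH (n : nat) (H : {set {perm 'I_n}}) (i : 'I_n) : {set {perm 'I_n}} :=
  [set s in H | s i == i].

Definition overlap (p1 l1 p2 l2 : nat) : bool :=
  ((p1 <= p2) && (p2 < p1 + l1)) || ((p2 <= p1) && (p1 < p2 + l2)).

From mathcomp Require Import all_boot all_fingroup zify.
Set Implicit Arguments. Unset Strict Implicit.

(* The relations of S_n(H) only rewrite words of length n, so the words
   representing z are exactly the words a_{s(1)}...a_{s(n)} with s in H.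
   Writing w_1 and w_2 as w_{1,1}' s w_{1,3}' and w_{1,1}' s' w_{1,3}', it
   suffices to show s = s'.  In case (i) the overlapping occurrences t and t'
   of z end after s and s', inside the common suffix w_{1,3}'; comparing the
   last letter a_n across the three overlaps yields equations
   t(n) = t'(y), s(y) = t(z'), s'(n) = t'(z').  Since H is abelian these give
   s(n) = s'(n), and as H_n is trivial, s = s'.  Case (ii) is the mirror
   image, with the letter a_1 and the common prefix w_{1,1}'. *)

Lemma inord_max n : inord n = ord_max :> 'I_n.+1.
Proof. by apply/val_inj; rewrite /= inordK. Qed.

Lemma inord0 n : inord 0 = ord0 :> 'I_n.+1.
Proof. by apply/val_inj; rewrite /= inordK. Qed.

Lemma nth_cat_eq_suffix (T : Type) (x0 : T) (u b1 b2 v : seq T) j :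
  size u + size b1 <= j -> size b1 = size b2 ->
  nth x0 (u ++ b1 ++ v) j = nth x0 (u ++ b2 ++ v) j.
Proof.
move=> le_j eq_b; rewrite !catA !nth_cat !size_cat -eq_b.
by rewrite ltnNge le_j.
Qed.

Lemma nth_cat_eq_prefix (T : Type) (x0 : T) (u v1 v2 : seq T) j :
  j < size u -> nth x0 (u ++ v1) j = nth x0 (u ++ v2) j.
Proof. by move=> lt_j; rewrite !nth_cat lt_j. Qed.

Section PermWords.

Variable n : nat.
Implicit Types (s t : {perm 'I_n.+1}) (u v w : seq 'I_n.+1).

Lemma size_perm_word s : size (perm_word s) = n.+1.
Proof. by rewrite size_map size_enum_ord. Qed.

Lemma size_zword : size (zword n.+1) = n.+1.
Proof. exact: size_enum_ord. Qed.

Lemma perm_word1 : perm_word 1 = zword n.+1.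
Proof. by rewrite /perm_word (eq_map (g := id)) ?map_id // => i; rewrite perm1. Qed.

Variable H : {group {perm 'I_n.+1}}.

Lemma rstep_size u v : rstep H u v -> size u = size v.
Proof.
by case=> p [q [s [_ [[-> ->]|[-> ->]]]]]; rewrite !size_cat size_perm_word size_zword.
Qed.

Lemma req_size u v : req H u v -> size u = size v.
Proof. by elim=> // u1 v1 w1 /rstep_size -> _. Qed.

Lemma rstep_full u v :
  rstep H u v -> size v = n.+1 -> exists2 s, s \in H & u = perm_word s.
Proof.
case=> p [q [s [sH [[-> ->]|[-> ->]]]]];
  rewrite !size_cat ?size_perm_word ?size_zword => sz;
  have [-> ->] : p = [::] /\ q = [::] by split; apply/size0nil; lia.
- by exists 1%g; rewrite // cats0 perm_word1.
- by exists s; rewrite // cats0.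
Qed.

Lemma pi_is_zP w : pi_is_z H w -> exists2 s, s \in H & w = perm_word s.
Proof.
rewrite /pi_is_z; move: (zword n.+1) size_zword perm_word1 => z sz_z z1 rw.
case: rw sz_z z1 => [u _ <-|u v w' step_uv /req_size eq_size sz_w' _]; first by exists 1%g.
by apply: rstep_full step_uv _; rewrite eq_size.
Qed.

Lemma stab1_perm_inj x s s' :
  stabH H x = [set 1%g] -> s \in H -> s' \in H -> s x = s' x -> s = s'.
Proof.
move=> stab1 sH s'H eq_sx.
have : (s * s'^-1)%g \in stabH H x.
  by rewrite inE groupM ?groupV // permM eq_sx permK eqxx.
by rewrite stab1 => /set1gP /eqP; rewrite -eq_mulgV1 => /eqP.
Qed.

Hypothesis abH : abelian H.

Lemma abelian_permC s t x : s \in H -> t \in H -> s (t x) = t (s x).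
Proof. by move=> sH tH; rewrite -!permM (centsP abH s sH t tH). Qed.

Lemma abelian_stab1_overlap x y z s t s' t' :
  stabH H x = [set 1%g] -> s \in H -> t \in H -> s' \in H -> t' \in H ->
  t x = t' y -> s y = t z -> s' x = t' z -> s = s'.
Proof.
move=> stab1 sH tH s'H t'H tx sy s'x; apply: (stab1_perm_inj stab1 sH s'H).
apply: (@perm_inj _ t).
rewrite abelian_permC // tx -abelian_permC // sy abelian_permC // s'x.
by rewrite abelian_permC.
Qed.

Definition perm_block_at w p s :=
  forall i, i <= n -> nth ord0 w (p + i) = s (inord i).

Lemma perm_block_at_cat u v s : perm_block_at (u ++ perm_word s ++ v) (size u) s.
Proof.
move=> i le_in; rewrite nth_cat ltnNge leq_addr addKn nth_cat size_perm_word ltnS le_in.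
rewrite (nth_map ord0) ?size_enum_ord //; congr (s _).
by apply/val_inj; rewrite /= inordK // nth_enum_ord.
Qed.

Lemma perm_block_eq_suffix w1 w2 p a b s t s' t' :
  stabH H ord_max = [set 1%g] ->
  s \in H -> t \in H -> s' \in H -> t' \in H ->
  p < a <= p + n -> p < b <= p + n ->
  perm_block_at w1 p s -> perm_block_at w1 a t ->
  perm_block_at w2 p s' -> perm_block_at w2 b t' ->
  (forall j, p + n < j -> nth ord0 w1 j = nth ord0 w2 j) -> s = s'.
Proof.
wlog le_ab : w1 w2 a b s t s' t' / a <= b => [hwlog|].
  move=> ? sH tH s'H t'H ? ? ? ? ? ? eq_tail; case: (leqP a b) => [|/ltnW] le.
    exact: (hwlog w1 w2 a b s t s' t').
  by symmetry; apply: (hwlog w2 w1 b a s' t' s t) => // j /eq_tail.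
move=> stab1 sH tH s'H t'H /andP[lt_pa le_a] /andP[lt_pb le_b] Bs Bt Bs' Bt' eq_tail.
apply: (abelian_stab1_overlap (y := inord (n - (b - a))) (z := inord (n - (b - p)))
  stab1 sH tH s'H t'H).
- rewrite -inord_max -Bt // -Bt' ?leq_subr // eq_tail; last lia.
  by congr nth; lia.
- by rewrite -Bs ?leq_subr // -Bt ?leq_subr //; congr nth; lia.
- by rewrite -inord_max -Bs' // -Bt' ?leq_subr //; congr nth; lia.
Qed.

Lemma perm_block_eq_prefix w1 w2 p a b s t s' t' :
  stabH H ord0 = [set 1%g] ->
  s \in H -> t \in H -> s' \in H -> t' \in H ->
  a < p <= a + n -> b < p <= b + n ->
  perm_block_at w1 p s -> perm_block_at w1 a t ->
  perm_block_at w2 p s' -> perm_block_at w2 b t' ->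
  (forall j, j < p -> nth ord0 w1 j = nth ord0 w2 j) -> s = s'.
Proof.
wlog le_ba : w1 w2 a b s t s' t' / b <= a => [hwlog|].
  move=> ? sH tH s'H t'H ? ? ? ? ? ? eq_head; case: (leqP b a) => [|/ltnW] le.
    exact: (hwlog w1 w2 a b s t s' t').
  by symmetry; apply: (hwlog w2 w1 b a s' t' s t) => // j /eq_head.
move=> stab1 sH tH s'H t'H /andP[lt_ap le_a] /andP[lt_bp le_b] Bs Bt Bs' Bt' eq_head.
apply: (abelian_stab1_overlap (y := inord (a - b)) (z := inord (p - b))
  stab1 sH tH s'H t'H).
- rewrite -inord0 -Bt // -Bt'; last lia.
  by rewrite addn0 eq_head //; congr nth; lia.
- by rewrite -Bs; last lia; rewrite -Bt; last lia; congr nth; lia.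
- by rewrite -inord0 -Bs' // -Bt'; last lia; congr nth; lia.
Qed.

End PermWords.

Theorem lemma2p1 (n : nat) (H : {group {perm 'I_n.+1}}) (Hab : abelian H)
  (w1 w2 w11 w12 w13 w11' w12' w13' w22 w21' w22' w23' : seq 'I_n.+1) :
  w1 = w11 ++ w12 ++ w13 ->
  w1 = w11' ++ w12' ++ w13' ->
  w2 = w11' ++ w22 ++ w13' ->
  w2 = w21' ++ w22' ++ w23' ->
  pi_is_z H w12 -> pi_is_z H w12' -> pi_is_z H w22 -> pi_is_z H w22' ->
  (overlap (size w11) (size w12) (size w11') (size w12') ->
   overlap (size w11') (size w22) (size w21') (size w22') ->
   size w13 < size w13' -> size w23' < size w13' ->
   stabH H ord_max = [set 1%g] ->
   w1 = w2) /\
  (overlap (size w11) (size w12) (size w11') (size w12') ->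
   overlap (size w11') (size w22) (size w21') (size w22') ->
   size w11 < size w11' -> size w21' < size w11' ->
   stabH H ord0 = [set 1%g] ->
   w1 = w2).
Proof.
move=> E1 E1' E2 E2' /pi_is_zP[t tH ?] /pi_is_zP[s sH ?].
move=> /pi_is_zP[s' s'H ?] /pi_is_zP[t' t'H ?]; subst w12 w12' w22 w22'.
have Bt := perm_block_at_cat w11 w13 t; have Bs := perm_block_at_cat w11' w13' s.
have Bs' := perm_block_at_cat w11' w13' s'; have Bt' := perm_block_at_cat w21' w23' t'.
rewrite -E1 in Bt; rewrite -E1' in Bs; rewrite -E2 in Bs'; rewrite -E2' in Bt'.
have sz1 := congr1 size (etrans (esym E1) E1').
have sz2 := congr1 size (etrans (esym E2) E2').
rewrite !size_cat !size_perm_word in sz1 sz2.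
have eq_words : s = s' -> w1 = w2 by rewrite E1' E2 => ->.
rewrite /overlap !size_perm_word; split=> O1 O2 lt1 lt2 stab1; apply: eq_words.
- apply: (perm_block_eq_suffix Hab stab1 sH tH s'H t'H _ _ Bs Bt Bs' Bt'); try lia.
  by move=> j lt_j; rewrite E1' E2; apply: nth_cat_eq_suffix; rewrite ?size_perm_word //; lia.
- apply: (perm_block_eq_prefix Hab stab1 sH tH s'H t'H _ _ Bs Bt Bs' Bt'); try lia.
  by move=> j lt_j; rewrite E1' E2; apply: nth_cat_eq_prefix.
Qed.
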